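(* Let $n \geq 2$ and suppose there exists a normalized symmetric conference matrix $C(n)$ of order $n$. Then for each $m \in \{n+1, n+2, n+3\}$, the complete graph $K_m$ has a good signing, i.e. there is an edge-signing $\sigma: E(K_m) \to \{-1,1\}$ such that every eigenvalue $\lambda$ of the signed adjacency matrix $A^{\sigma}$ satisfies $|\lambda| \leq 2\sqrt{m-2}$.
   Context: A conference matrix of order $n$ is an $n\times n$ matrix $C(n)$ with zero diagonal and off-diagonal entries in $\{1,-1\}$ such that $C(n)C(n)^T = (n-1)I$. It is normalized symmetric if it is symmetric and all entries of its first row are non-negative. For a graph $G$ and an edge-signing $\sigma: E(G)\to\{-1,1\}$, the signed adjacency matrix $A^{\sigma}=[a^\sigma_{ij}]$ has $a^{\sigma}_{ij}=\sigma(ij)$ if $ij\in E(G)$ and $0$ otherwise. For a $d$-regular graph $G$, a signing $\sigma$ is called a good signing if all eigenvalues of $A^{\sigma}$ have absolute value at most $2\sqrt{d-1}$; $K_m$ is $(m-1)$-regular. *)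

From HB Require Import structures.
From mathcomp Require Import all_boot all_order all_algebra.
Set Implicit Arguments. Unset Strict Implicit. Unset Printing Implicit Defensive.
Import Order.TTheory GRing.Theory Num.Theory.
Local Open Scope ring_scope.

Definition conference_matrix (R : numDomainType) (n : nat) (C : 'M[R]_n) : Prop :=
  [/\ (forall i, C i i = 0),
      (forall i j, i != j -> C i j = 1 \/ C i j = -1)
    & C *m C^T = (n.-1)%:R%:M].

Definition normalized_symmetric_conference (R : numDomainType) (n : nat)
    (C : 'M[R]_n) : Prop :=
  [/\ conference_matrix C, C^T = C
    & forall i j : 'I_n, nat_of_ord i = 0%N -> 0 <= C i j].

Definition Km_signing (m : nat) (sigma : {set 'I_m} -> int) : Prop :=
  forall e : {set 'I_m}, #|e| = 2%N -> sigma e = 1%Z \/ sigma e = (-1)%Z.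

Definition Km_signed_adj (R : pzRingType) (m : nat) (sigma : {set 'I_m} -> int)
    : 'M[R]_m :=
  \matrix_(i, j) (if i == j then 0 else (sigma [set i; j])%:~R).

(* Good signing of the d-regular graph K_m (d = m - 1): every eigenvalue of
   the signed adjacency matrix has absolute value at most 2 sqrt(d - 1).
   The matrix is real symmetric, so all its eigenvalues are real; we
   quantify over eigenvalues in the real closed field R. *)
Definition Km_good_signing (R : rcfType) (m : nat) (sigma : {set 'I_m} -> int)
    : Prop :=
  Km_signing sigma /\
  forall lambda : R, eigenvalue (Km_signed_adj R sigma) lambda ->
    `|lambda| <= 2 * Num.sqrt ((m.-1)%:R - 1).

(** K_(n+k) is signed by the bordered matrix A = [[C, J], [J, I - J]], J all-ones.
    Because C is symmetric with C^2 = (n-1) I and first row (0, 1, ..., 1),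
    the quantities y_0, sum y and sum z of an eigenvector (y, z) of A satisfy
    a closed 3x3 linear system.  Eliminating them, every eigenvalue l is 1,
    a square root of n - 1, or a root of the cubic
    (l^2 - (n-1)) (l + k - 1) = k (n l + 2 (n-1)), and for 1 <= k <= 3 all
    of these satisfy l^2 <= 4 (n + k - 2). *)

From HB Require Import structures.
From mathcomp Require Import all_boot all_order all_algebra.
From mathcomp Require Import ring lra zify.
Set Implicit Arguments.
Unset Strict Implicit.
Unset Printing Implicit Defensive.
Import Order.TTheory GRing.Theory Num.Theory.
Local Open Scope ring_scope.

Lemma sym_fun_set2 (T : finType) (rT : Type) (x0 : rT) (f : T -> T -> rT) :
  (forall i j, f i j = f j i) ->
  exists g : {set T} -> rT, forall i j, g [set i; j] = f i j.
Proof.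
move=> fC.
exists (fun e => if [pick p : T * T | e == [set p.1; p.2]] is Some p then f p.1 p.2 else x0).
move=> i j; case: pickP => [[a b] /eqP /= eab | /(_ (i, j))]; last by rewrite eqxx.
have : a \in [set i; j] /\ b \in [set i; j] by rewrite eab set21 set22.
have : i \in [set a; b] /\ j \in [set a; b] by rewrite -eab set21 set22.
by case=> /set2P[] ? /set2P[] ? [/set2P[] ? /set2P[] ?]; subst; rewrite // fC.
Qed.

Lemma signed_adj_of_sym_sign (R : numDomainType) (m : nat) (A : 'M[R]_m) :
  (forall i, A i i = 0) -> A^T = A ->
  (forall i j, i != j -> A i j = 1 \/ A i j = -1) ->
  exists sigma, Km_signing sigma /\ Km_signed_adj R sigma = A.
Proof.
move=> A_diag A_sym A_sign.
have sgzA_sym : forall i j, sgz (A i j) = sgz (A j i).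
  by move=> i j; rewrite -[in LHS]A_sym mxE.
have [sigma sigmaE] := sym_fun_set2 0%Z sgzA_sym.
exists sigma; split.
  move=> e /eqP /cards2P [i [j [ij ->]]]; rewrite sigmaE.
  by case: (A_sign i j ij) => ->; [left; apply: sgz1 | right; apply: sgzN1].
apply/matrixP => i j; rewrite mxE sigmaE; case: eqVneq => [->|ij]; first by rewrite A_diag.
by case: (A_sign i j ij) => ->; rewrite ?sgz1 ?sgzN1.
Qed.

Lemma mul_row_const1 (R : pzSemiRingType) (p q : nat) (u : 'rV[R]_p) :
  u *m (const_mx 1 : 'M_(p, q)) = const_mx (\sum_i u 0 i).
Proof.
by apply/matrixP => a b; rewrite [a]ord1 !mxE; apply: eq_bigr => i _; rewrite mxE mulr1.
Qed.

Definition bordered_conference (R : pzRingType) (n k : nat) (C : 'M[R]_n) :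
    'M[R]_(n + k) :=
  block_mx C (const_mx 1) (const_mx 1) (1%:M - const_mx 1).

Section BorderedConference.

Variables (R : pzRingType) (n k : nat) (C : 'M[R]_n).

Lemma bordered_conference_diag :
  (forall i, C i i = 0) -> forall i, bordered_conference k C i i = 0.
Proof.
move=> C_diag i; rewrite /bordered_conference -(splitK i); case: (split i) => a /=.
  by rewrite block_mxEul C_diag.
by rewrite block_mxEdr !mxE eqxx subrr.
Qed.

Lemma tr_bordered_conference :
  C^T = C -> (bordered_conference k C)^T = bordered_conference k C.
Proof.
by move=> C_sym; rewrite tr_block_mx C_sym !trmx_const linearB /= trmx1 trmx_const.
Qed.

Lemma bordered_conference_sign :
  (forall i j, i != j -> C i j = 1 \/ C i j = -1) ->
  forall i j, i != j ->
    bordered_conference k C i j = 1 \/ bordered_conference k C i j = -1.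
Proof.
move=> C_sign i j; rewrite /bordered_conference -(splitK i) -(splitK j).
case: (split i) => a; case: (split j) => b /= ab.
- by rewrite block_mxEul; apply: C_sign; apply: contraNneq ab => ->.
- by rewrite block_mxEur mxE; left.
- by rewrite block_mxEdl mxE; left.
- have ab' : a != b by apply: contraNneq ab => ->.
  by rewrite block_mxEdr !mxE (negbTE ab') sub0r; right.
Qed.

Lemma mul_row_bordered_conference (y : 'rV[R]_n) (z : 'rV[R]_k) :
  row_mx y z *m bordered_conference k C =
  row_mx (y *m C + const_mx (\sum_i z 0 i))
         (const_mx (\sum_i y 0 i) + (z - const_mx (\sum_i z 0 i))).
Proof.
by rewrite mul_row_block !mul_row_const1 mulmxBr mulmx1 mul_row_const1.
Qed.

End BorderedConference.

Section BorderedConferenceEigenvalues.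

Variables (R : fieldType) (n k : nat) (C : 'M[R]_n) (i0 : 'I_n).
Hypotheses (C_sym : C^T = C) (C_sqr : C *m C = (n.-1)%:R%:M)
  (C_row0 : forall j, C i0 j = (j != i0)%:R).

Local Notation N := ((n.-1)%:R : R).
Local Notation K := (k%:R : R).
Local Notation e0 := (delta_mx i0 0 : 'cV[R]_n).

Lemma conference_col0 : C *m e0 = const_mx 1 - e0.
Proof.
apply/matrixP => i j; rewrite [j]ord1 -colE !mxE -C_sym mxE C_row0 eqxx andbT.
by case: (i == i0); rewrite ?subrr ?subr0.
Qed.

Lemma conference_row_sums : C *m const_mx 1 = N *: e0 + (const_mx 1 - e0).
Proof.
have ones_E : const_mx 1 = C *m e0 + e0 by rewrite conference_col0 subrK.
by rewrite {1}ones_E mulmxDr mulmxA C_sqr mul_scalar_mx conference_col0.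
Qed.

Lemma bordered_eigen_sums (l : R) (y : 'rV[R]_n) (z : 'rV[R]_k) :
  let S := \sum_i z 0 i in
  y *m C + const_mx S = l *: y ->
  const_mx (\sum_i y 0 i) + (z - const_mx S) = l *: z ->
  S = 0 \/ (l ^+ 2 - N) * (l + K - 1) = K * ((N + 1) * l + 2 * N).
Proof.
move=> S Ey Ez; set Y := \sum_i y 0 i in Ez *.
have n_eq : n%:R = N + 1.
  by rewrite natr1 prednK // (leq_ltn_trans (leq0n i0) (ltn_ord i0)).
have eq_i0 : Y - y 0 i0 + S = l * y 0 i0.
  have := congr1 (fun v => (v *m e0) 0 0) Ey.
  by rewrite /= mulmxDl -mulmxA conference_col0 mulmxBr -scalemxAl -!colE mul_row_const1 !mxE.
have eq_Y : (N - 1) * y 0 i0 + Y + (N + 1) * S = l * Y.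
  have := congr1 (fun v => (v *m const_mx 1 : 'M_1) 0 0) Ey.
  rewrite /= mulmxDl -mulmxA conference_row_sums mulmxDr mulmxBr -scalemxAr -scalemxAl.
  rewrite -!colE !mul_row_const1 !mxE; under [X in _ + X = _]eq_bigr do rewrite mxE.
  by rewrite sumr_const card_ord -[S *+ n]mulr_natl n_eq -/Y => <-; ring.
have eq_S : K * Y + S - K * S = l * S.
  have := congr1 (fun v => (v *m const_mx 1 : 'M_1) 0 0) Ez.
  rewrite /= !mulmxDl mulNmx -scalemxAl !mul_row_const1 !mxE -/S.
  under eq_bigr do rewrite mxE; under [X in _ - X]eq_bigr do rewrite mxE.
  by rewrite !sumr_const card_ord -[Y *+ k]mulr_natl -[S *+ k]mulr_natl => <-; ring.
suff : S * ((l ^+ 2 - N) * (l + K - 1) - K * ((N + 1) * l + 2 * N)) = 0.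
  by move/eqP; rewrite mulf_eq0 subr_eq0 => /orP[] /eqP; [left | right].
transitivity (K * ((l + 1) * (l * Y - ((N - 1) * y 0 i0 + Y + (N + 1) * S))
                   + (N - 1) * (l * y 0 i0 - (Y - y 0 i0 + S)))
              + (l ^+ 2 - N) * (l * S - (K * Y + S - K * S))); first by ring.
by rewrite eq_i0 eq_Y eq_S !subrr; ring.
Qed.

Lemma eigenvalue_bordered_conference (l : R) :
  eigenvalue (bordered_conference k C) l ->
  [\/ l = 1, l ^+ 2 = N | (l ^+ 2 - N) * (l + K - 1) = K * ((N + 1) * l + 2 * N)].
Proof.
move=> /eigenvalueP [x]; rewrite -(hsubmxK x) mul_row_bordered_conference scale_row_mx.
set y := lsubmx x; set z := rsubmx x => /eq_row_mx [Ey Ez] x_neq0.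
have [S0 | cubic] := bordered_eigen_sums Ey Ez; last by constructor 3.
rewrite S0 addr0 in Ey; rewrite S0 subr0 in Ez.
have : (l ^+ 2 - N) *: y = 0.
  by rewrite scalerBl expr2 -scalerA -Ey scalemxAl -Ey -mulmxA C_sqr mul_mx_scalar subrr.
move/eqP; rewrite scaler_eq0 subr_eq0 => /orP[/eqP l_sqr | /eqP y_eq0]; first by constructor 2.
have Y0 : \sum_i y 0 i = 0 by rewrite y_eq0 big1 // => i _; rewrite mxE.
rewrite Y0 add0r in Ez.
have : (l - 1) *: z = 0 by rewrite scalerBl -Ez scale1r subrr.
move/eqP; rewrite scaler_eq0 subr_eq0 => /orP[/eqP l_eq1 | /eqP z_eq0]; first by constructor 1.
by move: x_neq0; rewrite y_eq0 z_eq0 row_mx0 eqxx.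
Qed.

End BorderedConferenceEigenvalues.

Lemma cubic_root_sqr_le (R : realFieldType) (N l : R) (k : nat) :
  1 <= N -> (0 < k <= 3)%N ->
  (l ^+ 2 - N) * (l + k%:R - 1) = k%:R * ((N + 1) * l + 2 * N) ->
  l ^+ 2 <= 4 * (N + k%:R - 1).
Proof.
move=> N_ge1 k_bounds root; rewrite leNgt; apply/negP => big.
have tail_neg : l < 0 -> 4 * k%:R < l ^+ 2 ->
    (2 * k%:R - 1) * l + k%:R - 3 + 4 * (k%:R - 1) ^+ 2 < 0 :> R.
  by case/andP: k_bounds; case: k {root big} => [|[|[|[|k]]]] //= _ _ *; nra.
have [K_ge1 K_le3] : 1 <= k%:R :> R /\ k%:R <= 3 :> R.
  by case/andP: k_bounds => k_gt0 k_le3; rewrite ler1n ler_nat.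
set K : R := k%:R in root big K_ge1 K_le3 tail_neg.
(* Once l^2 > 4 (N + K - 1), every summand has the sign of l. *)
have key : 0 = (l ^+ 2 - 4 * (N + K - 1)) * (l + K - 1) + (N - 1) * (3 - K) * (l - 1)
               + ((2 * K - 1) * l + K - 3 + 4 * (K - 1) ^+ 2).
  by rewrite -[LHS](subrr ((l ^+ 2 - N) * (l + K - 1))) {2}root; ring.
have [l_pos|l_neg] := ltP 0 l.
  have l_gt2 : 2 < l by nra.
  have h1 : 0 < (l ^+ 2 - 4 * (N + K - 1)) * (l + K - 1) by apply: mulr_gt0; lra.
  have h2 : 0 <= (N - 1) * (3 - K) * (l - 1) by rewrite !mulr_ge0 //; lra.
  nra.
have l_ltm2 : l < -2 by nra.
have h1 : (l ^+ 2 - 4 * (N + K - 1)) * (l + K - 1) < 0 by rewrite pmulr_rlt0; lra.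
have h2 : (N - 1) * (3 - K) * (l - 1) <= 0.
  by apply: mulr_ge0_le0; [apply: mulr_ge0|]; lra.
have := tail_neg (lt_trans l_ltm2 _); lra.
Qed.

Lemma ler_norm_2sqrt (R : rcfType) (t l : R) :
  0 <= t -> l ^+ 2 <= 4 * t -> `|l| <= 2 * Num.sqrt t.
Proof.
move=> t_ge0 l_sqr.
rewrite -(ler_pXn2r (isT : (0 < 2)%N)) ?nnegrE ?mulr_ge0 ?sqrtr_ge0 //.
by rewrite exprMn sqr_sqrtr // real_normK ?num_real //; lra.
Qed.

Theorem mainTheorem1 (R : rcfType) (n : nat) (hn : (2 <= n)%N)
  (hC : exists C : 'M[R]_n, normalized_symmetric_conference C) :
  forall m : nat, (n + 1 <= m <= n + 3)%N ->
    exists sigma : {set 'I_m} -> int, Km_good_signing R sigma.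
Proof.
move=> m m_bounds; have [C [[C_diag C_sign C_sqr] C_sym C_row0_ge0]] := hC.
rewrite C_sym in C_sqr.
have n_gt0 : (0 < n)%N by apply: ltnW.
pose i0 : 'I_n := Ordinal n_gt0.
have C_row0 : forall j, C i0 j = (j != i0)%:R.
  move=> j; case: eqVneq => [->|j_neq]; first by rewrite C_diag.
  have := C_row0_ge0 i0 j erefl.
  by case: (C_sign i0 j); rewrite 1?eq_sym // => ->; lra.
have [k [k_bounds ->]] : exists k, (0 < k <= 3)%N /\ m = (n + k)%N.
  by exists (m - n)%N; lia.
have [sigma [sigma_sign sigma_adj]] := signed_adj_of_sym_sign
  (bordered_conference_diag (k := k) C_diag) (tr_bordered_conference k C_sym)
  (bordered_conference_sign (k := k) C_sign).
exists sigma; split => // l; rewrite sigma_adj.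
have N_ge1 : 1 <= (n.-1)%:R :> R by rewrite ler1n -ltnS prednK.
have K_ge1 : 1 <= k%:R :> R by rewrite ler1n; case/andP: k_bounds.
have -> : ((n + k).-1)%:R - 1 = (n.-1)%:R + k%:R - 1 :> R.
  by rewrite -natrD -!subn1 addnBAC.
move/(eigenvalue_bordered_conference C_sym C_sqr C_row0) => l_cases.
apply: ler_norm_2sqrt; first lra.
case: l_cases => [-> | -> | /cubic_root_sqr_le]; [lra | lra | exact].
Qed.
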